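(* In the setting of the context, let $\Lambda$ be a linear relation in the vertex space $\mathcal F$ and $$\Lambda_C=\{(V_CW^{-1}f',\ V_CW^{-1}f):\ (f,f')\in\Lambda\}\subset\mathcal G\oplus\mathcal G.$$ Let $D^{\Lambda_W}$ be the restriction of $D^{max}$ to $\{\Phi\in\widetilde H^1(\mathbf G;\mathbb C^2):(W\Gamma^1\Phi,W\Gamma^2\Phi)\in\Lambda\}$ and $D^{\Lambda_C}$ the restriction of $D^{max}$ to $\{\Phi\in\widetilde H^1(\mathbf G;\mathbb C^2):(\Gamma^1\Phi,\Gamma^2\Phi)\in\Lambda_C\}$. Then $$D^{\Lambda_C}C=-CD^{\Lambda_W}.$$
   Context: Let $m\ge0$. A finite oriented metric graph $\mathbf G$ has a finite nonempty vertex set $\mathcal V$, finite sets $\mathcal I$ (internal) and $\mathcal E$ (external) of edges, $\mathcal J=\mathcal I\cup\mathcal E\ne\emptyset$, no loops. Each internal edge $i$ is identified with $I_i=(a_i,b_i)$, $a_i$ and $b_i$ corresponding to its initial and terminal vertex. An external edge $e$ is identified with $(a_e,+\infty)$ ($\rho(e)=-1$) or $(-\infty,b_e)$ ($\rho(e)=1$), finite endpoint $\partial e$ corresponding to its vertex. $\mathscr H=\bigoplus_jL^2(I_j;\mathbb C^2)$, $\widetilde H^1=\bigoplus_jH^1(I_j;\mathbb C^2)$, $\Phi=(\phi_j)_j$; $D^{max}$ acts edgewise by $-i\sigma_1\phi_j'+m\sigma_3\phi_j$ ($\sigma_1=\begin{pmatrix}0&1\\1&0\end{pmatrix}$, $\sigma_3=\operatorname{diag}(1,-1)$).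 $\mathcal G=\bigoplus_j\mathcal G_j$, $\mathcal G_i=\mathbb C^2$, $\mathcal G_e=\mathbb C$; $\Gamma^k=\bigoplus_j\Gamma^k_j$, $\Gamma^1_i\Phi=(\phi_i^1(a_i),\phi_i^1(b_i))^T$, $\Gamma^2_i\Phi=(i\phi_i^2(a_i),-i\phi_i^2(b_i))^T$, $\Gamma^1_e\Phi=\phi_e^1(\partial e)$, $\Gamma^2_e\Phi=-i\rho(e)\phi^2_e(\partial e)$. Vertex space $\mathcal F=\bigoplus_v\mathbb C^{\deg v}$; coordinates of $\mathcal G$ and $\mathcal F$ are labelled by pairs $(j,v)$, $v$ a vertex endpoint of $j$, ordered in $\mathcal G$ edge by edge (initial vertex first for internal edges) and in $\mathcal F$ vertex by vertex (then by the fixed edge order); $W:\mathcal G\to\mathcal F$ is the permutation matrix sending coordinate $(j,v)$ of $\mathcal G$ to coordinate $(j,v)$ of $\mathcal F$. $C\Phi=(\sigma_1\overline{\phi_j})_j$ (antilinear). $V_C=\bigoplus_jV_{C,j}$ is the antilinear map on $\mathcal G$ with $V_{C,j}\omega_j=i\sigma_3\overline{\omega_j}$ for $j\in\mathcal I$ and $V_{C,j}\omega_j=-i\rho(j)\overline{\omega_j}$ for $j\in\mathcal E$. *)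

From HB Require Import structures.
From mathcomp Require Import all_boot all_order all_algebra.
From mathcomp Require Import all_classical all_reals all_analysis.
From mathcomp Require Import complex.
Set Implicit Arguments.
Unset Strict Implicit.
Unset Printing Implicit Defensive.
Import Order.TTheory GRing.Theory Num.Theory.
Local Open Scope ring_scope.
Local Open Scope complex_scope.
Local Open Scope classical_set_scope.

(* Internal edge i ~ (ai i, bi i), initial vertex vinit i, terminal    *)
(* vertex vterm i.  External edge e has finite endpoint ce e attached   *)
(* to vertex vext e;  rho e = true  encodes rho(e) = 1, edge (-oo,ce e) *)
(*                    rho e = false encodes rho(e) = -1, edge (ce e,+oo)*)
Record metric_graph (R : realType) := MetricGraph {
  gV : finType;
  gI : finType;
  gE : finType;
  vinit : gI -> gV;
  vterm : gI -> gV;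
  vext : gE -> gV;
  ai : gI -> R;
  bi : gI -> R;
  ce : gE -> R;
  rho : gE -> bool;
  gV_nonempty : (0 < #|gV|)%N;
  gJ_nonempty : (0 < #|gI| + #|gE|)%N;
  ab_lt : forall i, ai i < bi i;
  no_loops : forall i, vinit i != vterm i
}.

Section Graph.
Variable R : realType.
Variable G : metric_graph R.

Local Notation C := R[i].
Local Notation mu := (@lebesgue_measure R).

Definition gJ := (gI G + gE G)%type.

Definition rhoC (e : gE G) : C := if rho e then 1 else -1.

Definition edge_open (j : gJ) : set R :=
  match j with
  | inl i => `](ai i), (bi i)[
  | inr e => if rho e then `]-oo, (ce e)[ else `](ce e), +oo[
  end.
Definition edge_closed (j : gJ) : set R :=
  match j with
  | inl i => `[(ai i), (bi i)]
  | inr e => if rho e then `]-oo, (ce e)] else `[(ce e), +oo[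
  end.

(* Coordinates of G: pairs (j, v), v a vertex endpoint of j.
   inl (i, false) = (i, initial vertex), inl (i, true) = (i, terminal vertex),
   inr e = (e, its vertex). *)
Definition halfedge := ((gI G * bool) + gE G)%type.
Definition hvert (h : halfedge) : gV G :=
  match h with
  | inl (i, false) => vinit i
  | inl (i, true) => vterm i
  | inr e => vext e
  end.

(* boundary space  G = (+)_j G_j,  G_i = C^2, G_e = C *)
Definition bspace := halfedge -> C.
(* vertex space F = (+)_v C^{deg v}: coordinates grouped vertex by vertex,
   the deg v coordinates at v being the pairs (j, v) *)
Definition vidx := {v : gV G & {h : halfedge | hvert h == v}}.
Definition vspace := vidx -> C.

(* W : G -> F sends coordinate (j,v) of G to coordinate (j,v) of F *)
Definition Wmap (g : bspace) : vspace := fun p => g (sval (projT2 p)).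
Definition Winv (f : vspace) : bspace :=
  fun h => f (existT _ (hvert h) (exist _ h (eqxx (hvert h)))).

Definition VC (w : bspace) : bspace := fun h =>
  match h with
  | inl (i, false) => 'i * (w h)^*
  | inl (i, true) => - 'i * (w h)^*
  | inr e => - 'i * rhoC e * (w h)^*
  end.

Definition linear_relation (L : vspace -> vspace -> Prop) :=
  L (fun _ => 0) (fun _ => 0) /\
  forall (a : C) f1 f1' f2 f2', L f1 f1' -> L f2 f2' ->
    L (fun p => a * f1 p + f2 p) (fun p => a * f1' p + f2' p).

Definition LambdaC (L : vspace -> vspace -> Prop) (g1 g2 : bspace) : Prop :=
  exists f f', L f f' /\ g1 = VC (Winv f') /\ g2 = VC (Winv f).

Definition c1 : 'I_2 := ord0.
Definition c2 : 'I_2 := ord_max.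

Definition L2c (D : set R) (f : R -> C) : Prop :=
  measurable_fun D (fun x => complex.Re (f x)) /\
  measurable_fun D (fun x => complex.Im (f x)) /\
  mu.-integrable D
    (fun x => ((complex.Re (f x)) ^+ 2 + (complex.Im (f x)) ^+ 2)%:E).

Definition L2v (D : set R) (f : R -> 'cV[C]_2) : Prop :=
  forall k, L2c D (fun x => f x k ord0).

(* g is a derivative of f on the (closed) interval K, in the sense of
   absolute continuity: f y - f x = \int_x^y g for all x <= y in K *)
Definition is_primitive (K : set R) (f g : R -> C) : Prop :=
  forall x y, K x -> K y -> x <= y ->
    ((complex.Re (f y) - complex.Re (f x))%:E =
       (\int[mu]_(t in `[x, y]) (complex.Re (g t))%:E)%E) /\
    ((complex.Im (f y) - complex.Im (f x))%:E =
       (\int[mu]_(t in `[x, y]) (complex.Im (g t))%:E)%E).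

(* f is (the continuous representative, on the closed edge, of) an
   element of H^1(I_j; C^2) with weak derivative g *)
Definition H1_edge (j : gJ) (f g : R -> 'cV[C]_2) : Prop :=
  L2v (edge_open j) f /\ L2v (edge_open j) g /\
  forall k, is_primitive (edge_closed j) (fun x => f x k ord0)
                                         (fun x => g x k ord0).

(* elements of the Hilbert space H = (+)_j L^2(I_j; C^2), via representatives *)
Definition gfun := gJ -> R -> 'cV[C]_2.
Definition inH (Phi : gfun) : Prop := forall j, L2v (edge_open j) (Phi j).
Definition aeeq (Phi Psi : gfun) : Prop :=
  forall j, {ae mu, forall x, edge_open j x -> Phi j x = Psi j x}.

Definition sigma1 : 'M[C]_2 := \matrix_(k, l) (if k == l then 0 else 1).
Definition sigma3 : 'M[C]_2 :=
  \matrix_(k, l) (if k == l then (if k == c1 then 1 else -1) else 0).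

Definition Cop (Phi : gfun) : gfun :=
  fun j x => sigma1 *m map_mx (fun z : C => z^*) (Phi j x).

Definition Dexpr (m : R) (Phi dPhi : gfun) : gfun :=
  fun j x => - 'i *: (sigma1 *m dPhi j x) + (m%:C) *: (sigma3 *m Phi j x).

Definition Gamma1 (Phi : gfun) : bspace := fun h =>
  match h with
  | inl (i, false) => Phi (inl i) (ai i) c1 ord0
  | inl (i, true) => Phi (inl i) (bi i) c1 ord0
  | inr e => Phi (inr e) (ce e) c1 ord0
  end.
Definition Gamma2 (Phi : gfun) : bspace := fun h =>
  match h with
  | inl (i, false) => 'i * Phi (inl i) (ai i) c2 ord0
  | inl (i, true) => - 'i * Phi (inl i) (bi i) c2 ord0
  | inr e => - 'i * rhoC e * Phi (inr e) (ce e) c2 ord0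
  end.

(* Graph of the restriction of D^max to
   {Phi in H~^1 : (Gamma^1 Phi, Gamma^2 Phi) in B}, as a relation on H
   (closed under a.e. equality): DB Phi Psi  <->  Phi in dom, Psi = D Phi. *)
Definition D_bc (m : R) (B : bspace -> bspace -> Prop) (Phi Psi : gfun) : Prop :=
  inH Phi /\ inH Psi /\
  exists Phi0 dPhi0 : gfun,
    (forall j, H1_edge j (Phi0 j) (dPhi0 j)) /\
    aeeq Phi Phi0 /\
    B (Gamma1 Phi0) (Gamma2 Phi0) /\
    aeeq Psi (Dexpr m Phi0 dPhi0).

Definition D_LambdaW (m : R) (L : vspace -> vspace -> Prop) :=
  D_bc m (fun g1 g2 => L (Wmap g1) (Wmap g2)).
Definition D_LambdaC (m : R) (L : vspace -> vspace -> Prop) :=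
  D_bc m (LambdaC L).

End Graph.

From HB Require Import structures.
From mathcomp Require Import all_boot all_order all_algebra.
From mathcomp Require Import all_classical all_reals all_analysis.
From mathcomp Require Import complex ring.
Import Order.TTheory GRing.Theory Num.Theory.
Local Open Scope ring_scope.

(* Charge conjugation C is an antilinear involution that preserves
   square integrability and H^1 regularity, and it anticommutes with the
   Dirac expression, since conjugation fixes the real mass m and sends -i
   to i.  On traces it swaps the two boundary maps up to the involution
   V_C: Gamma^1 (C Phi) = V_C Gamma^2 Phi and Gamma^2 (C Phi) = V_C Gamma^1 Phi.
   Hence C maps the domain of D^{Lambda_W} onto the domain defined by the
   boundary relation {(V_C g2, V_C g1) : (W g1, W g2) in Lambda}, which is
   Lambda_C because V_C is an involution and W is invertible. *)

Section ComplexParts.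
Variable R : pzRingType.

Lemma Re_conjc (z : R[i]) : complex.Re (conjc z) = complex.Re z.
Proof. by case: z. Qed.

Lemma Im_conjc (z : R[i]) : complex.Im (conjc z) = - complex.Im z.
Proof. by case: z. Qed.

Lemma Re_oppc (z : R[i]) : complex.Re (- z) = - complex.Re z.
Proof. by case: z. Qed.

Lemma Im_oppc (z : R[i]) : complex.Im (- z) = - complex.Im z.
Proof. by case: z. Qed.

End ComplexParts.

Lemma fin_num_adde_def (R : numDomainType) (a b : \bar R) :
  (a + b)%E \is a fin_num -> (a +? b)%E.
Proof. by case: a b => [a| |] [b| |]. Qed.

Section SquareIntegrable.
Variable R : realType.

Lemma L2c_conj D (f : R -> R[i]) : L2c D f -> L2c D (fun x => conjc (f x)).
Proof.
case=> mRe [mIm intf]; split; [|split].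
- by under eq_fun do rewrite Re_conjc.
- under eq_fun do rewrite Im_conjc; exact: measurable_realfun.measurable_funN.
- by under eq_fun do rewrite Re_conjc Im_conjc sqrrN.
Qed.

Lemma L2c_opp D (f : R -> R[i]) : L2c D f -> L2c D (fun x => - f x).
Proof.
case=> mRe [mIm intf]; split; [|split].
- under eq_fun do rewrite Re_oppc; exact: measurable_realfun.measurable_funN.
- under eq_fun do rewrite Im_oppc; exact: measurable_realfun.measurable_funN.
- by under eq_fun do rewrite Re_oppc Im_oppc !sqrrN.
Qed.

Lemma is_primitive_conj K (f g : R -> R[i]) :
  is_primitive K f g -> is_primitive K (fun x => conjc (f x)) (fun x => conjc (g x)).
Proof.
move=> fg x y Kx Ky xy; have [fgRe fgIm] := fg x y Kx Ky xy; split.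
  by rewrite !Re_conjc fgRe; apply: eq_integral => t _; rewrite Re_conjc.
under eq_integral do rewrite Im_conjc EFinN.
rewrite integralN; first by rewrite -fgIm !Im_conjc -EFinN opprB opprK addrC.
by apply: fin_num_adde_def; rewrite -integralE -fgIm.
Qed.

End SquareIntegrable.

Section ChargeConjugation.
Variable R : realType.
Variable G : metric_graph R.
Local Notation C := R[i].
Local Notation mu := (@lebesgue_measure R).

Lemma ord2P (k : 'I_2) : k = c1 \/ k = c2.
Proof. by case: k => -[|[|//]] hk; [left | right]; apply: val_inj. Qed.

Lemma cV2P (u v : 'cV[C]_2) :
  u c1 ord0 = v c1 ord0 -> u c2 ord0 = v c2 ord0 -> u = v.
Proof. by move=> e1 e2; apply/matrixP => k l; rewrite [l]ord1; case: (ord2P k) => ->. Qed.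

Lemma lift0_c2 : lift ord0 ord0 = c2.
Proof. exact: val_inj. Qed.

Lemma Cop_c1 (P : gfun G) j x : Cop P j x c1 ord0 = (P j x c2 ord0)^*.
Proof. by rewrite /Cop !mxE big_ord_recl big_ord1 !mxE /= lift0_c2 mul0r add0r mul1r. Qed.

Lemma Cop_c2 (P : gfun G) j x : Cop P j x c2 ord0 = (P j x c1 ord0)^*.
Proof. by rewrite /Cop !mxE big_ord_recl big_ord1 !mxE /= lift0_c2 mul0r addr0 mul1r. Qed.

Lemma CopK : involutive (@Cop R G).
Proof.
move=> P; apply/funext => j; apply/funext => x.
by apply: cV2P; rewrite !(Cop_c1, Cop_c2) conjCK.
Qed.

Lemma Cop_opp (P : gfun G) : Cop (fun j x => - P j x) = (fun j x => - Cop P j x).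
Proof.
apply/funext => j; apply/funext => x.
by apply: cV2P; rewrite !(Cop_c1, Cop_c2, mxE) rmorphN.
Qed.

Lemma Dexpr_c1 m (P dP : gfun G) j x :
  Dexpr m P dP j x c1 ord0 = - 'i * dP j x c2 ord0 + m%:C%C * P j x c1 ord0.
Proof.
by rewrite /Dexpr !mxE !big_ord_recl !big_ord0 !mxE /= lift0_c2 !mul0r !mul1r !add0r !addr0.
Qed.

Lemma Dexpr_c2 m (P dP : gfun G) j x :
  Dexpr m P dP j x c2 ord0 = - 'i * dP j x c1 ord0 - m%:C%C * P j x c2 ord0.
Proof.
rewrite /Dexpr !mxE !big_ord_recl !big_ord0 !mxE /= lift0_c2.
by rewrite !mul0r !mul1r !add0r !addr0 mulN1r mulrN.
Qed.

Lemma Dexpr_Cop m (P dP : gfun G) :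
  Dexpr m (Cop P) (Cop dP) = (fun j x => - Cop (Dexpr m P dP) j x).
Proof.
have mJ : (m%:C%C)^* = m%:C%C :> C := conjc_real m.
apply/funext => j; apply/funext => x; apply: cV2P;
  rewrite [RHS]mxE !(Cop_c1, Cop_c2, Dexpr_c1, Dexpr_c2) ?rmorphB ?rmorphD
          !rmorphM /= rmorphN /= conjCi mJ opprK; ring.
Qed.

Lemma VCK : involutive (@VC R G).
Proof.
have iiN : 'i * 'i = -1 :> C by rewrite -expr2 sqrCi.
have rho2 (e : gE G) : rhoC e * rhoC e = 1.
  by rewrite /rhoC; case: (rho e); rewrite ?mulrNN mulr1.
have rhoJ (e : gE G) : (rhoC e)^* = rhoC e.
  by rewrite /rhoC; case: (rho e); rewrite ?rmorphN rmorph1.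
move=> w; apply/funext => -[[i []]|e] /=.
all: rewrite !rmorphM /= ?rmorphN /= ?conjCi ?rhoJ conjCK.
- by rewrite opprK mulrA mulNr iiN opprK mul1r.
- by rewrite mulrA mulrN iiN opprK mul1r.
- rewrite opprK (_ : _ * _ = - ('i * 'i) * (rhoC e * rhoC e) * w (inr e)); last by ring.
  by rewrite iiN rho2 opprK !mul1r.
Qed.

Lemma Gamma2_Cop (P : gfun G) : Gamma2 (Cop P) = VC (Gamma1 P).
Proof. by apply/funext => -[[i []]|e] /=; rewrite Cop_c2. Qed.

Lemma Gamma1_Cop (P : gfun G) : Gamma1 (Cop P) = VC (Gamma2 P).
Proof. by rewrite -[in RHS](CopK P) Gamma2_Cop VCK. Qed.

Lemma L2v_Cop D (P : gfun G) j : L2v D (P j) -> L2v D (Cop P j).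
Proof.
move=> P2 k; case: (ord2P k) => ->.
- by rewrite (funext (Cop_c1 P j)); apply: L2c_conj.
- by rewrite (funext (Cop_c2 P j)); apply: L2c_conj.
Qed.

Lemma inH_Cop (P : gfun G) : inH P -> inH (Cop P).
Proof. by move=> HP j; apply: L2v_Cop. Qed.

Lemma inH_opp (P : gfun G) : inH P -> inH (fun j x => - P j x).
Proof.
move=> HP j k /=; under eq_fun => x do rewrite mxE; exact/L2c_opp/HP.
Qed.

Lemma H1_edge_Cop j (P dP : gfun G) :
  H1_edge j (P j) (dP j) -> H1_edge j (Cop P j) (Cop dP j).
Proof.
case=> P2 [dP2 prim]; split; [exact: L2v_Cop | split; first exact: L2v_Cop].
move=> k; case: (ord2P k) => ->.
- by rewrite (funext (Cop_c1 P j)) (funext (Cop_c1 dP j)); apply: is_primitive_conj.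
- by rewrite (funext (Cop_c2 P j)) (funext (Cop_c2 dP j)); apply: is_primitive_conj.
Qed.

Lemma opp_CopK (P : gfun G) : (fun j x => - Cop (fun j x => - Cop P j x) j x) = P.
Proof. by rewrite Cop_opp; apply/funext => j; apply/funext => x; rewrite opprK CopK. Qed.

Lemma aeeq_refl (P : gfun G) : aeeq P P.
Proof. by move=> j; apply: aeW. Qed.

Lemma aeeq_trans (P Q S : gfun G) : aeeq P Q -> aeeq Q S -> aeeq P S.
Proof.
move=> PQ QS j.
have ae_filter : Filter (nbhs (almost_everywhere mu)) := ae_filter_ringOfSetsType mu.
by apply: filterS2 (PQ j) (QS j) => x PQx QSx Ix; rewrite PQx // QSx.
Qed.

Lemma aeeq_map (F : 'cV[C]_2 -> 'cV[C]_2) (P Q : gfun G) :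
  aeeq P Q -> aeeq (fun j x => F (P j x)) (fun j x => F (Q j x)).
Proof.
move=> PQ j.
have ae_filter : Filter (nbhs (almost_everywhere mu)) := ae_filter_ringOfSetsType mu.
by apply: filterS (PQ j) => x PQx Ix; rewrite PQx.
Qed.

Lemma aeeq_Cop (P Q : gfun G) : aeeq P Q -> aeeq (Cop P) (Cop Q).
Proof. exact: (aeeq_map (fun v => sigma1 R *m map_mx conjc v)). Qed.

Lemma aeeq_opp (P Q : gfun G) :
  aeeq P Q -> aeeq (fun j x => - P j x) (fun j x => - Q j x).
Proof. exact: aeeq_map. Qed.

End ChargeConjugation.

Section BoundaryConditions.
Variable R : realType.
Variable G : metric_graph R.

Lemma WinvK : cancel (@Winv R G) (@Wmap R G).
Proof.
move=> f; apply/funext => -[v [h hv]]; rewrite /Wmap /Winv /=.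
move: (hv); rewrite -(eqP hv) => {}hv.
by rewrite (bool_irrelevance hv (eqxx (hvert h))).
Qed.

Lemma LambdaCE (L : vspace G -> vspace G -> Prop) g1 g2 :
  LambdaC L g1 g2 <-> L (Wmap (VC g2)) (Wmap (VC g1)).
Proof.
split=> [[f [f' [Lff' [-> ->]]]] | Lg]; first by rewrite !VCK !WinvK.
by exists (Wmap (VC g2)), (Wmap (VC g1)); rewrite !VCK.
Qed.

Variable m : R.

Lemma D_bc_sub (B B' : bspace G -> bspace G -> Prop) Phi Psi :
  (forall g1 g2, B g1 g2 -> B' g1 g2) -> D_bc m B Phi Psi -> D_bc m B' Phi Psi.
Proof.
move=> BB' [Phi2 [Psi2 [Phi0 [dPhi0 [H1 [Phi0E [BPhi0 Psi0E]]]]]]].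
by do 2 split => //; exists Phi0, dPhi0; do 3 split => //; apply: BB'.
Qed.

Lemma D_bc_aeeq B (Phi Psi Psi' : gfun G) :
  inH Psi' -> aeeq Psi' Psi -> D_bc m B Phi Psi -> D_bc m B Phi Psi'.
Proof.
move=> Psi'2 Psi'E [Phi2 [_ [Phi0 [dPhi0 [H1 [Phi0E [BPhi0 Psi0E]]]]]]].
do 2 split => //; exists Phi0, dPhi0; do 3 split => //.
exact: aeeq_trans Psi'E Psi0E.
Qed.

Lemma D_bc_Cop B (Phi Psi : gfun G) :
  D_bc m B Phi Psi ->
  D_bc m (fun g1 g2 => B (VC g2) (VC g1)) (Cop Phi) (fun j x => - Cop Psi j x).
Proof.
move=> [Phi2 [Psi2 [Phi0 [dPhi0 [H1 [Phi0E [BPhi0 Psi0E]]]]]]].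
split; first exact: inH_Cop.
split; first exact/inH_opp/inH_Cop.
exists (Cop Phi0), (Cop dPhi0); split; first by move=> j; apply: H1_edge_Cop.
split; first exact: aeeq_Cop.
split; first by rewrite Gamma1_Cop Gamma2_Cop !VCK.
by rewrite Dexpr_Cop; apply/aeeq_opp/aeeq_Cop.
Qed.

End BoundaryConditions.

Theorem theorem4p20 (R : realType) (G : metric_graph R) (m : R) (hm : 0 <= m)
    (Lambda : vspace G -> vspace G -> Prop) (hL : linear_relation Lambda)
    (Phi Psi : gfun G) (hPhi : inH Phi) (hPsi : inH Psi) :
  D_LambdaC m Lambda (Cop Phi) Psi <->
  exists Psi0 : gfun G,
    D_LambdaW m Lambda Phi Psi0 /\
    aeeq Psi (fun j x => - Cop Psi0 j x).
Proof.
split=> [/D_bc_Cop | [Psi0 [/D_bc_Cop DPsi0 Psi0E]]].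
- rewrite CopK => DCPsi; exists (fun j x => - Cop Psi j x); split.
    by apply: D_bc_sub DCPsi => g1 g2 /LambdaCE; rewrite !VCK.
  by rewrite opp_CopK; apply: aeeq_refl.
- apply: D_bc_aeeq hPsi Psi0E _.
  by apply: D_bc_sub DPsi0 => g1 g2 /LambdaCE.
Qed.
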